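(* Let $G$ be a Hausdorff topological group, $(g_n)_{n\in\mathbb N}$ a sequence of pairwise distinct elements of $G$, and $A=\{g_1,g_2,\dots\}$. Consider: (ap1) $A$ is absolutely productive in $G$; (ap2) for every injection $\sigma:\mathbb N\to\mathbb N$ the sequence $(g_{\sigma(n)})_n$ is hyper-multipliable in $G$; (ap3) for every bijection $\sigma:\mathbb N\to\mathbb N$ the sequence $(g_{\sigma(n)})_n$ is hyper-multipliable in $G$; (ap4) $(g_n)_n$ is hyper-multipliable in $G$. Then (a) (ap1), (ap2), (ap3) are equivalent and imply (ap4); (b) if $G$ is abelian, then (ap1)–(ap4) are all equivalent.
   Context: $\prod_{k=1}^n a_k=a_1\cdots a_n$. A sequence $(g_n)$ in $G$ is hyper-multipliable if for every integer sequence $(m_n)$ the sequence $\left(\prod_{k=1}^n g_k^{m_k}\right)_n$ converges in $G$. A subset $A\subset G$ is absolutely productive in $G$ if every sequence of pairwise distinct elements of $A$ is hyper-multipliable in $G$. *)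

From Stdlib Require Import ZArith.

Set Implicit Arguments.

Record TopGroup := {
  carrier :> Type;
  mul : carrier -> carrier -> carrier;
  inv : carrier -> carrier;
  one : carrier;
  mulA : forall x y z, mul x (mul y z) = mul (mul x y) z;
  mul1g : forall x, mul one x = x;
  mulg1 : forall x, mul x one = x;
  mulVg : forall x, mul (inv x) x = one;
  mulgV : forall x, mul x (inv x) = one;
  is_open : (carrier -> Prop) -> Prop;
  open_full : is_open (fun _ => True);
  open_inter : forall U V, is_open U -> is_open V -> is_open (fun x => U x /\ V x);
  open_union : forall (I : Type) (F : I -> carrier -> Prop),
      (forall i, is_open (F i)) -> is_open (fun x => exists i, F i x);
  mul_cont : forall x y W, is_open W -> W (mul x y) ->
      exists U V, is_open U /\ is_open V /\ U x /\ V y /\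
        (forall u v, U u -> V v -> W (mul u v));
  inv_cont : forall W, is_open W -> is_open (fun x => W (inv x))
}.

Definition hausdorff (G : TopGroup) : Prop :=
  forall x y : G, x <> y ->
    exists U V : G -> Prop, is_open G U /\ is_open G V /\ U x /\ V y /\
      (forall z, U z -> V z -> False).

Definition abelian (G : TopGroup) : Prop :=
  forall x y : G, mul G x y = mul G y x.

Definition zpow (G : TopGroup) (g : G) (m : Z) : G :=
  match m with
  | Z0 => one G
  | Zpos p => Pos.iter (fun y => mul G y g) (one G) p
  | Zneg p => Pos.iter (fun y => mul G y (inv G g)) (one G) p
  end.

(** Sequences indexed by nat (index 0 plays the role of 1). *)
Definition converges_to (G : TopGroup) (s : nat -> G) (x : G) : Prop :=
  forall U : G -> Prop, is_open G U -> U x -> exists N, forall n, (N <= n)%nat -> U (s n).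

Definition converges (G : TopGroup) (s : nat -> G) : Prop :=
  exists x, @converges_to G s x.

Fixpoint partial_prod (G : TopGroup) (g : nat -> G) (m : nat -> Z) (n : nat) : G :=
  match n with
  | O => one G
  | S k => mul G (@partial_prod G g m k) (@zpow G (g k) (m k))
  end.

Definition hyper_multipliable (G : TopGroup) (g : nat -> G) : Prop :=
  forall m : nat -> Z, @converges G (@partial_prod G g m).

Definition injective_seq {T : Type} (s : nat -> T) : Prop :=
  forall i j, s i = s j -> i = j.

Definition absolutely_productive (G : TopGroup) (A : G -> Prop) : Prop :=
  forall s : nat -> G, injective_seq s -> (forall n, A (s n)) ->
    @hyper_multipliable G s.

Definition bijective_nat (f : nat -> nat) : Prop :=
  injective_seq f /\ forall j, exists i, f i = j.

(** For (ap3) -> (ap2) we pad an injection [s] into a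
    bijection: after [s n] we insert the index [n] itself whenever [n] is not
    a value of [s], and give it exponent 0.  Every partial product of [g ∘ s]
    then reappears, arbitrarily late, among the partial products of the
    padded sequence, so it inherits their convergence.

    For abelian [G] it remains to prove (ap4) -> (ap2).  A
    hyper-multipliable sequence has uniformly small tails: all finite blocks
    [h_a^e_a ... h_(a+k-1)^e_(a+k-1)] with [a] large lie in a given
    neighbourhood of 1 (otherwise glue bad blocks far apart into one exponent
    sequence whose partial products are not Cauchy).  By commutativity a
    partial product of [g ∘ s] is a partial product of [g] whose exponents
    are supported on [s({0..n-1})]; it is compared with the partial products
    of [g] for the exponents [m k] placed at [s k]. *)

From Stdlib Require Import ZArith Lia Classical ClassicalEpsilon FunctionalExtensionality.

Arguments partial_prod {G} g m n.
Arguments zpow {G} g m.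
Arguments converges_to {G} s x.
Arguments converges {G} s.
Arguments hyper_multipliable {G} g.

Section Increasing.
Variable c : nat -> nat.
Hypothesis c_incr : forall i, (c i < c (S i))%nat.

Lemma incr_lt i i' : (i < i')%nat -> (c i < c i')%nat.
Proof.
  induction 1 as [|i' _ IH]; [apply c_incr|].
  specialize (c_incr i'); lia.
Qed.

Lemma incr_le i i' : (i <= i')%nat -> (c i <= c i')%nat.
Proof. intro L. destruct (Nat.eq_dec i i') as [->|Ne]; [lia|]. apply Nat.lt_le_incl, incr_lt. lia. Qed.

Lemma incr_injective : injective_seq c.
Proof.
  intros i i' E.
  destruct (Nat.lt_trichotomy i i') as [L|[L|L]]; auto;
    apply incr_lt in L; lia.
Qed.

Lemma incr_ge_id i : (i <= c i)%nat.
Proof. induction i; [lia|]. specialize (c_incr i); lia. Qed.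

Lemma incr_interval_index :
  c 0 = 0%nat ->
  exists blk : nat -> nat, forall i j, (c i <= j < c (S i))%nat -> blk j = i.
Proof.
  intro c0.
  assert (Hex : forall j, exists i, (c i <= j < c (S i))%nat).
  { induction j as [|j [i Hi]].
    - exists 0%nat. specialize (c_incr 0). lia.
    - destruct (Nat.eq_dec (S j) (c (S i))) as [E|E].
      + exists (S i). specialize (c_incr (S i)). lia.
      + exists i. lia. }
  destruct (choice _ Hex) as [blk Hblk]. exists blk.
  intros i j Hi. specialize (Hblk j).
  destruct (Nat.lt_trichotomy i (blk j)) as [L|[L|L]]; auto; exfalso.
  - pose proof (incr_le (S i) (blk j) L). lia.
  - pose proof (incr_le (S (blk j)) i L). lia.
Qed.

End Increasing.

Section PartialProducts.
Variable G : TopGroup.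

Lemma partial_prod_ext (h : nat -> G) (e e' : nat -> Z) (n : nat) :
  (forall j, (j < n)%nat -> e j = e' j) -> partial_prod h e n = partial_prod h e' n.
Proof.
  induction n as [|n IH]; intros E; simpl; auto.
  rewrite IH by (intros; apply E; lia). rewrite E by lia. reflexivity.
Qed.

Fixpoint block_prod (h : nat -> G) (e : nat -> Z) (a k : nat) : G :=
  match k with
  | O => one G
  | S k' => mul G (block_prod h e a k') (zpow (h (a + k')%nat) (e (a + k')%nat))
  end.

Lemma partial_prod_add (h : nat -> G) (e : nat -> Z) (a k : nat) :
  partial_prod h e (a + k) = mul G (partial_prod h e a) (block_prod h e a k).
Proof.
  induction k as [|k IH]; simpl.
  - rewrite Nat.add_0_r, mulg1. reflexivity.
  - rewrite Nat.add_succ_r. simpl. rewrite IH, mulA. reflexivity.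
Qed.

Lemma block_prod_ext (h : nat -> G) (e e' : nat -> Z) (a k : nat) :
  (forall t, (t < k)%nat -> e (a + t)%nat = e' (a + t)%nat) ->
  block_prod h e a k = block_prod h e' a k.
Proof.
  induction k as [|k IH]; intros E; simpl; auto.
  rewrite IH by (intros; apply E; lia). rewrite E by lia. reflexivity.
Qed.

Lemma converges_to_late_values (s t : nat -> G) (x : G) :
  converges_to t x -> (forall n, exists p, (n <= p)%nat /\ t p = s n) ->
  converges_to s x.
Proof.
  intros Ht Hlate U HU Ux.
  destruct (Ht U HU Ux) as [N HN]. exists N. intros n Hn.
  destruct (Hlate n) as [p [Hp <-]]. apply HN. lia.
Qed.

(** Convergent sequences are left Cauchy: eventually [s_a^-1 s_b] lies in
    any neighbourhood of 1 (continuity of [(u, v) |-> u^-1 v] at [(y, y)]). *)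
Lemma converges_left_cauchy (s : nat -> G) (y : G) :
  converges_to s y -> forall W, is_open G W -> W (one G) ->
  exists N, forall a b, (N <= a)%nat -> (N <= b)%nat -> W (mul G (inv G (s a)) (s b)).
Proof.
  intros Hs W HW W1.
  destruct (mul_cont G (inv G y) y W HW) as (U & V & HU & HV & Uy & Vy & HUV).
  { rewrite mulVg. exact W1. }
  destruct (Hs (fun x => U (inv G x) /\ V x)) as [N HN].
  { apply open_inter; [apply inv_cont|]; assumption. }
  { split; assumption. }
  exists N. intros a b Ha Hb. apply HUV; [apply (HN a Ha) | apply (HN b Hb)].
Qed.

(** ** Uniformly small tails *)

(** In a hyper-multipliable sequence, any family of blocks starting
    arbitrarily far out has a member in a given neighbourhood [W] of 1: glue
    the blocks, spaced apart, into one exponent sequence and use that its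
    partial products are left Cauchy. *)
Lemma far_blocks_meet (h : nat -> G) :
  hyper_multipliable h -> forall W, is_open G W -> W (one G) ->
  forall (a k : nat -> nat) (e : nat -> nat -> Z), (forall M, (M <= a M)%nat) ->
  exists M, W (block_prod h (e M) (a M) (k M)).
Proof.
  intros Hh W HW W1 a k e Ha.
  (* block [i] is taken at start [c i] and lies inside [[c i, c (S i))] *)
  set (c := fun i => Nat.iter i (fun M => (a M + k M + 1)%nat) 0%nat).
  assert (c_incr : forall i, (c i < c (S i))%nat).
  { intro i. change (c (S i)) with (a (c i) + k (c i) + 1)%nat. specialize (Ha (c i)). lia. }
  destruct (incr_interval_index c c_incr eq_refl) as [blk Hblk].
  set (glued := fun j => e (c (blk j)) j).
  destruct (Hh glued) as [y Hy].
  destruct (converges_left_cauchy _ _ Hy W HW W1) as [N HN].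
  exists (c N).
  assert (HaN : (N <= a (c N))%nat) by (pose proof (incr_ge_id c c_incr N); specialize (Ha (c N)); lia).
  specialize (HN (a (c N)) (a (c N) + k (c N))%nat HaN ltac:(lia)).
  rewrite partial_prod_add, mulA, mulVg, mul1g in HN.
  erewrite block_prod_ext; [exact HN|].
  intros t Ht. unfold glued. rewrite (Hblk N); [reflexivity|].
  change (c (S N)) with (a (c N) + k (c N) + 1)%nat. specialize (Ha (c N)). lia.
Qed.

Lemma uniform_tails (h : nat -> G) :
  hyper_multipliable h -> forall W, is_open G W -> W (one G) ->
  exists M, forall e a k, (M <= a)%nat -> W (block_prod h e a k).
Proof.
  intros Hh W HW W1. apply NNPP. intro Hnone.
  assert (Hbad : forall M, exists t : nat * nat * (nat -> Z),
             (M <= fst (fst t))%nat /\ ~ W (block_prod h (snd t) (fst (fst t)) (snd (fst t)))).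
  { intro M. apply NNPP. intro Hgood. apply Hnone. exists M. intros e a k Ha.
    apply NNPP. intro Hout. apply Hgood. exists (a, k, e). auto. }
  destruct (choice _ Hbad) as [F HF].
  destruct (far_blocks_meet h Hh W HW W1 (fun M => fst (fst (F M))) (fun M => snd (fst (F M)))
              (fun M => snd (F M)) (fun M => proj1 (HF M))) as [M HM].
  exact (proj2 (HF M) HM).
Qed.

End PartialProducts.

(** ** Padding an injection into a bijection *)

Section Padding.
Variable s : nat -> nat.

Definition in_range (n : nat) : bool :=
  if excluded_middle_informative (exists k, s k = n) then true else false.

Lemma in_range_false n : in_range n = false <-> ~ exists k, s k = n.
Proof. unfold in_range. destruct excluded_middle_informative; intuition congruence. Qed.

(** The padded enumeration runs through states [(n, false)], emitting [s n],
    and [(n, true)], emitting the filler [n]; the filler state is visited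
    exactly when [n] is not a value of [s]. *)
Definition pad_next (st : nat * bool) : nat * bool :=
  let (n, filler) := st in
  if orb filler (in_range n) then (S n, false) else (n, true).

Definition pad_state (p : nat) : nat * bool := Nat.iter p pad_next (0%nat, false).

Definition pad (p : nat) : nat :=
  let (n, filler) := pad_state p in if filler then n else s n.

Definition pad_exp (m : nat -> Z) (p : nat) : Z :=
  let (n, filler) := pad_state p in if filler then 0%Z else m n.

Lemma pad_state_filler p n : pad_state p = (n, true) -> in_range n = false.
Proof.
  destruct p as [|p]; [discriminate|]. change (pad_state (S p)) with (pad_next (pad_state p)).
  destruct (pad_state p) as [n' []]; simpl; [discriminate|].
  destruct (in_range n') eqn:R; congruence.
Qed.

(** States are visited in increasing order of [2n + filler]. *)
Lemma pad_state_injective : injective_seq pad_state.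
Proof.
  set (rank := fun p => let (n, filler) := pad_state p in (2 * n + if filler then 1 else 0)%nat).
  assert (rank_incr : forall p, (rank p < rank (S p))%nat).
  { intro p. unfold rank. change (pad_state (S p)) with (pad_next (pad_state p)).
    destruct (pad_state p) as [n []]; simpl; [lia|]. destruct (in_range n); simpl; lia. }
  intros p q E. apply (incr_injective rank rank_incr). unfold rank. rewrite E. reflexivity.
Qed.

Lemma pad_state_reaches n : exists p, (n <= p)%nat /\ pad_state p = (n, false).
Proof.
  induction n as [|n [p [Hp E]]]; [exists 0%nat; auto|].
  destruct (in_range n) eqn:R.
  - exists (S p). split; [lia|]. simpl. fold (pad_state p). rewrite E. simpl. rewrite R. reflexivity.
  - exists (S (S p)). split; [lia|]. simpl. fold (pad_state p). rewrite E. simpl. rewrite R. reflexivity.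
Qed.

Lemma pad_bijective : injective_seq s -> bijective_nat pad.
Proof.
  intro Hs. split.
  - intros p q. unfold pad.
    pose proof (pad_state_filler p) as Fp. pose proof (pad_state_filler q) as Fq.
    destruct (pad_state p) as [n []] eqn:Ep, (pad_state q) as [n' []] eqn:Eq; intro E.
    + subst. apply pad_state_injective. congruence.
    + exfalso. apply (proj1 (in_range_false n) (Fp _ eq_refl)). eauto.
    + exfalso. apply (proj1 (in_range_false n') (Fq _ eq_refl)). eauto.
    + apply Hs in E. subst. apply pad_state_injective. congruence.
  - intro j. destruct (classic (exists k, s k = j)) as [[k <-]|Hout].
    + destruct (pad_state_reaches k) as [p [_ E]]. exists p. unfold pad. rewrite E. reflexivity.
    + destruct (pad_state_reaches j) as [p [_ E]]. exists (S p). unfold pad.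
      simpl. fold (pad_state p). rewrite E. simpl.
      rewrite (proj2 (in_range_false j) Hout). reflexivity.
Qed.

Lemma partial_prod_pad (G : TopGroup) (g : nat -> G) (m : nat -> Z) (p : nat) :
  partial_prod (fun q => g (pad q)) (pad_exp m) p =
  partial_prod (fun k => g (s k)) m
    (let (n, filler) := pad_state p in if filler then S n else n).
Proof.
  induction p as [|p IH]; [reflexivity|].
  simpl partial_prod at 1. rewrite IH. unfold pad, pad_exp.
  change (pad_state (S p)) with (pad_next (pad_state p)).
  destruct (pad_state p) as [n []]; simpl; [apply mulg1|].
  destruct (in_range n); reflexivity.
Qed.

Lemma hyper_multipliable_of_pad (G : TopGroup) (g : nat -> G) :
  hyper_multipliable (fun q => g (pad q)) -> hyper_multipliable (fun k => g (s k)).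
Proof.
  intros Hpad m. destruct (Hpad (pad_exp m)) as [x Hx]. exists x.
  apply (converges_to_late_values _ _ _ _ Hx). intro n.
  destruct (pad_state_reaches n) as [p [Hp E]]. exists p. split; [exact Hp|].
  rewrite partial_prod_pad, E. reflexivity.
Qed.

End Padding.

Section Finiteness.
Variable s : nat -> nat.

Lemma values_bounded n : exists L, forall k, (k < n)%nat -> (s k < L)%nat.
Proof.
  induction n as [|n [L HL]]; [exists 0%nat; intros; lia|].
  exists (S (L + s n)). intros k Hk.
  destruct (Nat.eq_dec k n) as [->|Ne]; [lia|]. specialize (HL k ltac:(lia)). lia.
Qed.

Lemma values_attained_early M :
  exists K, forall j, (j < M)%nat -> (exists k, s k = j) -> exists k, (k < K)%nat /\ s k = j.
Proof.
  induction M as [|M [K HK]]; [exists 0%nat; intros; lia|].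
  destruct (classic (exists k, s k = M)) as [[k Hk]|Hout].
  - exists (S (K + k)). intros j Hj Hex. destruct (Nat.eq_dec j M) as [->|Ne].
    + exists k. split; [lia|exact Hk].
    + destruct (HK j ltac:(lia) Hex) as [k' [Hk' E]]. exists k'. split; [lia|exact E].
  - exists K. intros j Hj Hex. destruct (Nat.eq_dec j M) as [->|Ne]; [contradiction|].
    apply HK; [lia|exact Hex].
Qed.

End Finiteness.

(** ** Rearrangements in abelian groups *)

Lemma partial_prod_insert (G : TopGroup) (Hab : abelian G) (g : nat -> G)
    (f f' : nat -> Z) (p L : nat) :
  (p < L)%nat -> f p = 0%Z -> (forall j, j <> p -> f j = f' j) ->
  partial_prod g f' L = mul G (partial_prod g f L) (zpow (g p) (f' p)).
Proof.
  intros HpL Hp Hother. induction L as [|L IH]; [lia|].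
  destruct (Nat.eq_dec p L) as [->|Ne]; simpl.
  - rewrite Hp. simpl. rewrite mulg1. f_equal.
    apply partial_prod_ext. intros j Hj. symmetry. apply Hother. lia.
  - rewrite IH by lia. rewrite <- (Hother L) by auto.
    rewrite <- !mulA, (Hab (zpow (g p) _)). reflexivity.
Qed.

Section Abelian.
Variables (G : TopGroup) (Hab : abelian G) (g : nat -> G) (s : nat -> nat).
Hypothesis Hs : injective_seq s.
Variable m : nat -> Z.

Definition transported (j : nat) : Z :=
  match excluded_middle_informative (exists k, s k = j) with
  | left H => m (proj1_sig (constructive_indefinite_description _ H))
  | right _ => 0%Z
  end.

Lemma transported_value k : transported (s k) = m k.
Proof.
  unfold transported. destruct excluded_middle_informative as [H|N]; [|exfalso; eauto].
  destruct (constructive_indefinite_description _ H) as [k' Hk']. simpl.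
  apply Hs in Hk'. congruence.
Qed.

Definition transported_upto (n j : nat) : Z :=
  if excluded_middle_informative (exists k, (k < n)%nat /\ s k = j) then transported j else 0%Z.

Lemma transported_outside j : ~ (exists k, s k = j) -> transported j = 0%Z.
Proof. unfold transported. destruct excluded_middle_informative; tauto. Qed.

Lemma transported_upto_outside n j :
  ~ (exists k, (k < n)%nat /\ s k = j) -> transported_upto n j = 0%Z.
Proof. unfold transported_upto. destruct excluded_middle_informative; tauto. Qed.

Lemma transported_upto_inside n j :
  (exists k, (k < n)%nat /\ s k = j) -> transported_upto n j = transported j.
Proof. unfold transported_upto. destruct excluded_middle_informative; tauto. Qed.

Lemma partial_prod_reorder n L :
  (forall k, (k < n)%nat -> (s k < L)%nat) ->
  partial_prod (fun k => g (s k)) m n = partial_prod g (transported_upto n) L.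
Proof.
  induction n as [|n IH]; intros HL.
  - simpl. symmetry. induction L as [|L IHL]; [reflexivity|]. simpl.
    rewrite IHL by (intros; lia). rewrite transported_upto_outside by (intros [k [Hk _]]; lia).
    apply mulg1.
  - simpl. rewrite IH by (intros; apply HL; lia).
    rewrite (partial_prod_insert G Hab g (transported_upto n) (transported_upto (S n)) (s n) L).
    + rewrite transported_upto_inside, transported_value by eauto. reflexivity.
    + apply HL. lia.
    + apply transported_upto_outside. intros [k [Hk E]]. apply Hs in E. lia.
    + intros j Hj. unfold transported_upto.
      destruct excluded_middle_informative as [[k [Hk E]]|Hnone];
        destruct excluded_middle_informative as [[k' [Hk' E']]|Hnone']; auto.
      * exfalso. apply Hnone'. exists k. split; [lia|exact E].
      * exfalso. apply Hnone. exists k'. split; [|exact E'].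
        destruct (Nat.eq_dec k' n); [congruence|lia].
Qed.

(** If [g] is hyper-multipliable, the partial products of [g ∘ s] converge to
    the limit of those of [g] with the transported exponents. *)
Lemma rearranged_converges : hyper_multipliable g -> converges (partial_prod (fun k => g (s k)) m).
Proof.
  intro Hg. destruct (Hg transported) as [x Hx]. exists x.
  intros U HU Ux.
  destruct (mul_cont G x (one G) U HU) as (U1 & V1 & HU1 & HV1 & U1x & V1o & HUV).
  { rewrite mulg1. exact Ux. }
  destruct (Hx U1 HU1 U1x) as [N1 HN1].
  destruct (uniform_tails G g Hg V1 HV1 V1o) as [M0 HM0].
  set (M := (N1 + M0)%nat).
  destruct (values_attained_early s M) as [K HK]. exists K. intros n Hn.
  destruct (values_bounded s n) as [L HL].
  rewrite (partial_prod_reorder n (M + L)) by (intros k Hk; specialize (HL k Hk); lia).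
  rewrite partial_prod_add. apply HUV; [|apply HM0; unfold M; lia].
  (* below [M], the restricted exponents already agree with [transported] *)
  erewrite partial_prod_ext; [apply HN1; unfold M; lia|].
  intros j Hj. destruct (classic (exists k, s k = j)) as [Hin|Hout].
  - destruct (HK j Hj Hin) as [k [Hk E]].
    apply transported_upto_inside. exists k. split; [lia|exact E].
  - rewrite transported_outside by exact Hout.
    apply transported_upto_outside. intros [k [_ E]]. eauto.
Qed.

End Abelian.

Lemma absolutely_productive_range (G : TopGroup) (g : nat -> G) :
  injective_seq g ->
  absolutely_productive G (fun x : G => exists n, g n = x) <->
  (forall s : nat -> nat, injective_seq s -> hyper_multipliable (fun n => g (s n))).
Proof.
  intro Hg. split.
  - intros H1 s Hs. apply H1; [|intro n; eauto]. intros i j E. apply Hs, Hg, E.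
  - intros H2 t Ht HA. destruct (choice _ HA) as [s Es].
    replace t with (fun n => g (s n)) by (apply functional_extensionality; exact Es).
    apply H2. intros i j E. apply Ht. rewrite <- !Es, E. reflexivity.
Qed.

Theorem lemma3p2 (G : TopGroup) (HG : hausdorff G) (g : nat -> G)
    (Hg : injective_seq g) :
  let A := fun x : G => exists n, g n = x in
  let ap1 := @absolutely_productive G A in
  let ap2 := forall s : nat -> nat, injective_seq s ->
               @hyper_multipliable G (fun n => g (s n)) in
  let ap3 := forall s : nat -> nat, bijective_nat s ->
               @hyper_multipliable G (fun n => g (s n)) in
  let ap4 := @hyper_multipliable G g in
  ((ap1 <-> ap2) /\ (ap2 <-> ap3) /\ (ap1 -> ap4)) /\
  (abelian G -> (ap1 <-> ap4) /\ (ap2 <-> ap4) /\ (ap3 <-> ap4)).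
Proof.
  intros A ap1 ap2 ap3 ap4.
  assert (I12 : ap1 <-> ap2) by exact (absolutely_productive_range G g Hg).
  assert (I23 : ap2 -> ap3) by (intros H2 s [Hs _]; auto).
  assert (I32 : ap3 -> ap2).
  { intros H3 s Hs. apply hyper_multipliable_of_pad, H3, pad_bijective, Hs. }
  assert (I14 : ap1 -> ap4).
  { intros H1. apply H1; [exact Hg|]. intro n. exists n. reflexivity. }
  assert (I42 : abelian G -> ap4 -> ap2).
  { intros Hab H4 s Hs m. apply rearranged_converges; assumption. }
  split; [tauto|]. intro Hab. specialize (I42 Hab). tauto.
Qed.
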